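(* Let $p\in\mathbb{N}$, $0\le k\le\frac{p-1}{3}$ and $0\le t\le1$. Then $b^{\mathrm{refl}}_{p,k}(t,0)+b^{\mathrm{refl}}_{p,k}(1-t,0)+b^{\mathrm{refl}}_{p,k}(t,1-t)=0$.
   Context: With Jacobi polynomials $P_m^{(\alpha,\beta)}$ ($P_m^{(\alpha,\beta)}(1)=(\alpha+1)_m/m!$) and Legendre polynomials $P^{(0,0)}_k$, $b_{p,k}(x_1,x_2):=(x_1+x_2)^kP^{(0,2k+1)}_{p-k}(2(x_1+x_2)-1)P^{(0,0)}_k\!\left(\frac{x_1-x_2}{x_1+x_2}\right)$, and $b^{\mathrm{refl}}_{p,k}(x_1,x_2):=\frac13\big(2b_{p,2k}(x_1,x_2)-b_{p,2k}(x_2,1-x_1-x_2)-b_{p,2k}(1-x_1-x_2,x_1)\big)$. *)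

From mathcomp Require Import all_boot all_order all_algebra.
Set Implicit Arguments. Unset Strict Implicit. Unset Printing Implicit Defensive.
Import Order.TTheory GRing.Theory Num.Theory.
Local Open Scope ring_scope.

(* Jacobi polynomial P_n^{(a,b)}(x) for natural parameters a, b, via the
   classical explicit formula
   P_n^{(a,b)}(x) = sum_{s=0}^n C(n+a, n-s) C(n+b, s) ((x-1)/2)^s ((x+1)/2)^(n-s),
   normalised so that P_n^{(a,b)}(1) = C(n+a,n) = (a+1)_n / n!. *)
Definition jacobi {R : realFieldType} (a b n : nat) (x : R) : R :=
  \sum_(s < n.+1) ('C(n + a, n - s))%:R * ('C(n + b, s))%:R
     * ((x - 1) / 2) ^+ s * ((x + 1) / 2) ^+ (n - s).

Definition legendre {R : realFieldType} (k : nat) (x : R) : R := jacobi 0 0 k x.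

(* b_{p,k}(x1,x2) = (x1+x2)^k P^{(0,2k+1)}_{p-k}(2(x1+x2)-1) P_k((x1-x2)/(x1+x2)).
   (At x1+x2 = 0 the MathComp convention 0^-1 = 0 gives the same value as the
   polynomial extension.) *)
Definition bpk {R : realFieldType} (p k : nat) (x1 x2 : R) : R :=
  (x1 + x2) ^+ k * jacobi 0 (2 * k + 1) (p - k) (2 * (x1 + x2) - 1)
    * legendre k ((x1 - x2) / (x1 + x2)).

Definition brefl {R : realFieldType} (p k : nat) (x1 x2 : R) : R :=
  (2 * bpk p (2 * k) x1 x2 - bpk p (2 * k) x2 (1 - x1 - x2)
     - bpk p (2 * k) (1 - x1 - x2) x1) / 3.

(** Legendre polynomials of even degree are even, so [b_{p,2k}] is symmetric
    in its two arguments.  Writing [A = b(t,0)], [B = b(1-t,0)] and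
    [C = b(t,1-t)], symmetry turns the three reflected values into
    [(2A - B - C)/3], [(2B - A - C)/3] and [(2C - A - B)/3], which sum to 0. *)
From mathcomp Require Import all_boot all_order all_algebra.
From mathcomp Require Import ring.
Import Order.TTheory GRing.Theory Num.Theory.
Local Open Scope ring_scope.

Section JacobiReflection.

Variable R : realFieldType.

Lemma jacobiN (a b n : nat) (x : R) :
  jacobi a b n (- x) = (-1) ^+ n * jacobi b a n x.
Proof.
rewrite /jacobi mulr_sumr (reindex_inj rev_ord_inj); apply: eq_bigr => s _.
have le_sn : (s <= n)%N by rewrite -ltnS.
have -> : (rev_ord s : nat) = (n - s)%N by rewrite /= subSS.
rewrite subKn //.
have -> : (- x - 1) / 2 = - ((x + 1) / 2) by rewrite -mulNr opprD.
have -> : (- x + 1) / 2 = - ((x - 1) / 2) by rewrite -mulNr opprD opprK.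
have sign : (-1 : R) ^+ n = (-1) ^+ (n - s) * (-1) ^+ s by rewrite -exprD subnK.
rewrite sign (exprNn ((x + 1) / 2)) (exprNn ((x - 1) / 2)); ring.
Qed.

Lemma legendreN (k : nat) (x : R) : legendre k (- x) = (-1) ^+ k * legendre k x.
Proof. exact: jacobiN. Qed.

Lemma bpkC (p k : nat) (x1 x2 : R) :
  bpk p k x2 x1 = (-1) ^+ k * bpk p k x1 x2.
Proof.
rewrite /bpk (addrC x2 x1).
have -> : (x2 - x1) / (x1 + x2) = - ((x1 - x2) / (x1 + x2)) by rewrite -mulNr opprB.
rewrite legendreN; ring.
Qed.

Lemma bpk_evenC (p k : nat) (x1 x2 : R) :
  bpk p (2 * k) x2 x1 = bpk p (2 * k) x1 x2.
Proof. by rewrite bpkC exprM sqrrN !expr1n mul1r. Qed.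

End JacobiReflection.

Lemma reflected_edge_sum {R : comUnitRingType} {f : R -> R -> R}
    (fC : forall x y, f y x = f x y) (t : R) :
  let refl x1 x2 := (2 * f x1 x2 - f x2 (1 - x1 - x2) - f (1 - x1 - x2) x1) / 3 in
  refl t 0 + refl (1 - t) 0 + refl t (1 - t) = 0.
Proof.
move=> refl; rewrite /refl.
have -> : 1 - t - 0 = 1 - t by ring.
have -> : 1 - (1 - t) - 0 = t by ring.
have -> : 1 - t - (1 - t) = 0 by ring.
rewrite (fC 0 (1 - t)) (fC 0 t) (fC (1 - t) t); ring.
Qed.

Theorem lemma32 (R : realFieldType) (p k : nat) (t : R) :
  (3 * k + 1 <= p)%N -> 0 <= t -> t <= 1 ->
  brefl p k t 0 + brefl p k (1 - t) 0 + brefl p k t (1 - t) = 0.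
Proof.
move=> _ _ _; exact: (reflected_edge_sum (@bpk_evenC R p k) t).
Qed.
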